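(* For all nonnegative integers $n,\ell,m$, the number of partitions of $n$ with exactly $\ell$ parts and $2$-measure equal to $m$ equals the number of partitions of $n$ with exactly $\ell$ parts whose Durfee square has side length $m$.
   Context: For a partition $\lambda$ and positive integer $k$, the $k$-measure of $\lambda$ is the length of the longest subsequence of the parts of $\lambda$ (listed in weakly decreasing order) in which the difference between any two consecutive members of the subsequence is at least $k$. The Durfee square of a partition is the largest square $s\times s$ contained in its Young (Ferrers) diagram; its length is $s$, i.e., the largest $s$ such that $\lambda$ has at least $s$ parts of size at least $s$. *)

From mathcomp Require Import all_boot.
Set Implicit Arguments. Unset Strict Implicit. Unset Printing Implicit Defensive.

Definition is_partition (n : nat) (la : seq nat) : bool :=
  [&& sorted geq la, all (fun x => 0 < x) la & sumn la == n].

Fixpoint seqs_len (k n : nat) : seq (seq nat) :=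
  match k with
  | 0 => [:: [::]]
  | k'.+1 => [seq x :: s | x <- iota 1 n, s <- seqs_len k' n]
  end.

(* Every partition of n has at most n parts, each between 1 and n, so this
   list contains (exactly once) every partition of n. *)
Definition partitions (n : nat) : seq (seq nat) :=
  undup [seq la <- flatten [seq seqs_len k n | k <- iota 0 n.+1] | is_partition n la].

Fixpoint bitseqs (k : nat) : seq bitseq :=
  match k with
  | 0 => [:: [::]]
  | k'.+1 => [seq b :: m | b <- [:: false; true], m <- bitseqs k']
  end.

Definition k_measure (k : nat) (la : seq nat) : nat :=
  \max_(m <- bitseqs (size la) | sorted (fun a b => b + k <= a) (mask m la))
     size (mask m la).

Definition durfee (la : seq nat) : nat :=
  \max_(0 <= s < (size la).+1 | s <= count (fun x => s <= x) la) s.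

From mathcomp Require Import all_boot zify.
Set Implicit Arguments. Unset Strict Implicit. Unset Printing Implicit Defensive.

(* For a statistic st on partitions let peel st nu be st (lower2 nu) + 1 if nu
   has a part 1, where lower2 deletes the parts 1 and 2 and lowers the other
   parts by 2, and st (nu with every part lowered by 1) otherwise. Grouping the
   partitions of n with l parts by their numbers of parts 1 and 2 shows that the
   distribution of peel st is determined by the distribution of st on partitions
   of smaller integers, so by strong induction on n it suffices that each of the
   two statistics is equidistributed with its peeled version. For the 2-measure,
   peel changes nothing: a part 1 can always start a longest chain, whose other
   members are then at least 3. For the Durfee square, peel durfee (twist la) =
   durfee la for an injection twist of the partitions of n with l parts into
   themselves. *)

Lemma sumn_ge_size s : all (fun x => 0 < x) s -> size s <= sumn s.
Proof. by elim: s => //= x s IH /andP[x0 /IH]; lia. Qed.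

Lemma mem_leq_sumn x s : x \in s -> x <= sumn s.
Proof. by elim: s => //= y s IH /predU1P[->|/IH]; lia. Qed.

Lemma sumn_map_shift f s a b : {in s, forall x, f x + a = x + b} ->
  sumn (map f s) + a * size s = sumn s + b * size s.
Proof.
elim: s => [|x s IH] fs /=; first by rewrite !muln0.
have := IH (fun y ys => fs y (mem_behead (s := x :: s) ys)).
have := fs x (mem_head x s); rewrite !mulnS; set u := a * _; set v := b * _; lia.
Qed.

Lemma sumn_map_addn c s : sumn (map (addn c) s) = sumn s + c * size s.
Proof. by elim: s => [|x s IH] /=; rewrite ?muln0 // IH mulnS; set u := c * _; lia. Qed.

Lemma filter_in_pred1 (T : eqType) (p : pred T) y s :
  {in s, p =1 pred1 y} -> filter p s = nseq (count_mem y s) y.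
Proof. by move/eq_in_filter->; rewrite -size_filter; apply/all_pred1P/filter_all. Qed.

Lemma bigmax_seq_attained (I : eqType) (r : seq I) (P : pred I) (F : I -> nat) i0 :
  i0 \in r -> P i0 -> exists2 i, i \in r & P i /\ F i = \max_(j <- r | P j) F j.
Proof.
move=> ri0 Pi0; set M := \max_(j <- r | P j) F j.
have [/hasP[i ri /andP[Pi /eqP FiM]]|/hasPn noM] := boolP (has (fun i => P i && (F i == M)) r).
  by exists i.
have : M <= M.-1.
  apply/bigmax_leqP_seq => i ri Pi; have := noM i ri; rewrite Pi /=.
  by have := @leq_bigmax_seq _ r P F i ri Pi; rewrite -/M; lia.
have := noM i0 ri0; rewrite Pi0 /=.
by have := @leq_bigmax_seq _ r P F i0 ri0 Pi0; rewrite -/M; lia.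
Qed.

Section Counting.
Variables (T U : eqType).

Lemma count_bij_in (s : seq T) (t : seq U) (P : pred T) (Q : pred U)
    (f : T -> U) (g : U -> T) :
  uniq s -> uniq t ->
  {in filter P s, forall x, f x \in filter Q t} ->
  {in filter Q t, forall y, g y \in filter P s} ->
  {in filter P s, cancel f g} -> {in filter Q t, cancel g f} ->
  count P s = count Q t.
Proof.
move=> us ut fPQ gQP fK gK; rewrite -!size_filter; apply/eqP.
have le_PQ : size (filter P s) <= size (filter Q t).
  rewrite -(size_map f) uniq_leq_size ?map_inj_in_uniq ?filter_uniq //.
    exact: can_in_inj fK.
  by move=> _ /mapP[x xP ->]; apply: fPQ.
have le_QP : size (filter Q t) <= size (filter P s).
  rewrite -(size_map g) uniq_leq_size ?map_inj_in_uniq ?filter_uniq //.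
    exact: can_in_inj gK.
  by move=> _ /mapP[y yQ ->]; apply: gQP.
by rewrite eqn_leq le_PQ le_QP.
Qed.

Lemma count_preim_inj (s : seq T) (f : T -> T) (Q : pred T) :
  uniq s -> {in s, forall x, f x \in s} -> {in s &, injective f} ->
  count Q s = count (preim f Q) s.
Proof.
move=> us fs finj; have ufs : uniq (map f s) by rewrite map_inj_in_uniq.
have sub : {subset map f s <= s} by move=> _ /mapP[x xs ->]; apply: fs.
have [_ eq_fs] := uniq_min_size ufs sub (eq_leq (esym (size_map f s))).
by rewrite -count_map; apply/permP; rewrite perm_sym (uniq_perm ufs us eq_fs).
Qed.

Lemma count_fibers_eq (key : T -> U) (P Q : pred T) (s : seq T) :
  (forall k, count (fun x => P x && (key x == k)) s =
             count (fun x => Q x && (key x == k)) s) ->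
  count P s = count Q s.
Proof.
have sum_fibers (R : pred T) ks : uniq ks ->
    count (fun x => R x && (key x \in ks)) s =
    \sum_(k <- ks) count (fun x => R x && (key x == k)) s.
  elim: ks => [_|k ks IH /andP[kks uks]].
    by rewrite big_nil -(count_pred0 s); apply: eq_count => x; rewrite andbF.
  rewrite big_cons -IH // -count_predUI -[LHS]addn0; congr (_ + _).
    by apply: eq_count => x /=; rewrite inE; case: (R x).
  rewrite -(count_pred0 s); apply: eq_count => x /=.
  by case: (R x) => //=; case: eqP => // ->; rewrite (negbTE kks).
have keyE (R : pred T) : count R s = count (fun x => R x && (key x \in undup (map key s))) s.
  by apply: eq_in_count => x xs; rewrite mem_undup map_f ?andbT.
move=> eq_fibers; rewrite keyE [RHS]keyE !sum_fibers ?undup_uniq //.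
by apply: eq_bigr => k _; apply: eq_fibers.
Qed.

End Counting.

Lemma pairwise_geq_map f s :
  {homo f : x y / x <= y} -> pairwise geq s -> pairwise geq (map f s).
Proof. by move=> f_mono; rewrite pairwise_map; apply: sub_pairwise => x y /f_mono. Qed.

Lemma pairwise_geq_nseq n x : pairwise geq (nseq n x).
Proof. by elim: n => //= n ->; rewrite all_nseq /= leqnn orbT. Qed.

Lemma pairwise_geq_cat lo A B : pairwise geq A -> pairwise geq B ->
  all (fun x => lo <= x) A -> all (fun y => y <= lo) B -> pairwise geq (A ++ B).
Proof.
move=> pA pB /allP loA /allP Blo; rewrite pairwise_cat pA pB !andbT.
by apply/allrelP => x y xA yB; apply: leq_trans (Blo y yB) (loA x xA).
Qed.

Lemma pairwise_geq_split v s : pairwise geq s ->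
  s = filter (fun x => v <= x) s ++ filter (fun x => x < v) s.
Proof.
elim: s => //= x s IH /andP[/allP xs ps].
have [vx|xv] /= := leqP v x; first by rewrite -IH.
have below y : y \in s -> y < v by move/xs => /= yx; apply: leq_ltn_trans yx xv.
rewrite (eq_in_filter (a2 := pred0)) ?filter_pred0; last first.
  by move=> y /below; rewrite ltnNge => /negbTE.
by congr (_ :: _); apply/esym/all_filterP/allP.
Qed.

Lemma all_take_geq v i s : pairwise geq s -> i <= count (fun x => v <= x) s ->
  all (fun x => v <= x) (take i s).
Proof.
move=> ps le_i; rewrite (pairwise_geq_split v ps) take_cat size_filter.
case: ltnP => [_|ge_i]; first by apply/allP => x /mem_take; rewrite mem_filter => /andP[].
have -> : i = count (fun x => v <= x) s by apply/eqP; rewrite eqn_leq le_i.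
by rewrite subnn take0 cats0; apply/allP => x; rewrite mem_filter => /andP[].
Qed.

Lemma all_drop_lt v i s : pairwise geq s -> count (fun x => v <= x) s <= i ->
  all (fun x => x < v) (drop i s).
Proof.
move=> ps le_i; rewrite (pairwise_geq_split v ps) drop_cat size_filter ltnNge le_i.
by apply/allP => x /mem_drop; rewrite mem_filter => /andP[].
Qed.

Lemma mem_seqs_len k n s :
  (s \in seqs_len k n) = (size s == k) && all (fun x => 0 < x <= n) s.
Proof.
elim: k s => [|k IH] [|x s] /=; rewrite ?inE //.
  by apply/allpairsP => -[p []].
apply/allpairsP/idP => [[[y u]] /= [yI uI [-> ->]]|/andP[sz /andP[xn al]]].
  by move: yI uI; rewrite mem_iota IH => yI /andP[/eqP -> ->]; rewrite eqxx /=; lia.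
by exists (x, s); rewrite /= mem_iota IH al -eqSS sz; split=> //; lia.
Qed.

Lemma mem_bitseqs k m : (m \in bitseqs k) = (size m == k).
Proof.
elim: k m => [|k IH] [|b m] /=; rewrite ?inE //.
  by rewrite !mem_cat in_nil orbF; apply/negbTE/norP; split; apply/mapP => -[].
rewrite !mem_cat in_nil orbF eqSS -IH.
have consI (c : bool) : injective (cons c) by move=> ? ? [].
have notin c c' s : c != c' -> (c :: m \in map (cons c') s) = false.
  by move=> neq; apply/mapP => -[? _ [eq_c _]]; rewrite eq_c eqxx in neq.
by case: b; rewrite (mem_map (consI _)) notin ?orbF.
Qed.

Lemma partitionsP n la :
  reflect [/\ pairwise geq la, all (fun x => 0 < x) la & sumn la = n]
          (la \in partitions n).
Proof.
have -> : la \in partitions n = is_partition n la.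
  rewrite mem_undup mem_filter andb_idr // => /and3P[_ pos /eqP sn].
  apply/flatten_mapP; exists (size la).
    by rewrite mem_iota add0n ltnS -sn sumn_ge_size.
  rewrite mem_seqs_len eqxx; apply/allP => x xla.
  by rewrite (allP pos) //= -sn mem_leq_sumn.
rewrite /is_partition (sorted_pairwise (rev_trans leq_trans)).
by apply: (iffP and3P) => -[? ? /eqP]; split.
Qed.

Definition raise2 (a b : nat) (rho : seq nat) : seq nat :=
  map (addn 2) rho ++ nseq b 2 ++ nseq a 1.

Definition lower2 (nu : seq nat) : seq nat :=
  map (subn^~ 2) (filter (fun x => 3 <= x) nu).

Lemma raise2_lower2 la : pairwise geq la -> all (fun x => 0 < x) la ->
  la = raise2 (count_mem 1 la) (count_mem 2 la) (lower2 la).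
Proof.
move=> pla /allP pos; rewrite {1}(pairwise_geq_split 3 pla); congr (_ ++ _).
  by rewrite -map_comp map_id_in // => x; rewrite mem_filter /= => /andP[x3 _]; lia.
rewrite {1}(pairwise_geq_split 2 (pairwise_filter _ pla)) -!filter_predI.
by rewrite (@filter_in_pred1 _ _ 2) ?(@filter_in_pred1 _ _ 1) // => x /pos /=; lia.
Qed.

Lemma lower2_raise2 a b rho : all (fun x => 0 < x) rho -> lower2 (raise2 a b rho) = rho.
Proof.
move=> /allP pos; rewrite /lower2 /raise2 !filter_cat !filter_nseq /= cats0.
rewrite (all_filterP _); last by rewrite all_map; apply/allP => x /pos /=; lia.
by rewrite -map_comp map_id_in // => x _ /=; lia.
Qed.

Lemma lower2_partition la : pairwise geq la ->
  pairwise geq (lower2 la) /\ all (fun x => 0 < x) (lower2 la).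
Proof.
move=> pla; split; first by apply: pairwise_geq_map (pairwise_filter _ pla) => x y; lia.
by rewrite all_map; apply/allP => x; rewrite mem_filter /= => /andP[]; lia.
Qed.

Lemma raise2_partition a b rho : pairwise geq rho ->
  pairwise geq (raise2 a b rho) /\ all (fun x => 0 < x) (raise2 a b rho).
Proof.
move=> prho; rewrite /raise2; split;
  last by rewrite !all_cat all_map !all_nseq /= !orbT !andbT; apply/allP.
apply: (pairwise_geq_cat (lo := 2)).
- by apply: pairwise_geq_map prho => x y; lia.
- by apply: (pairwise_geq_cat (lo := 1)); rewrite ?pairwise_geq_nseq // all_nseq ?orbT.
- by rewrite all_map; apply/allP => x _ /=; rewrite leq_addr.
- by rewrite all_cat !all_nseq /= !orbT.
Qed.

Lemma size_raise2 a b rho : size (raise2 a b rho) = size rho + b + a.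
Proof. by rewrite !size_cat size_map !size_nseq addnA. Qed.

Lemma sumn_raise2 a b rho :
  sumn (raise2 a b rho) = sumn rho + 2 * size rho + 2 * b + a.
Proof. by rewrite !sumn_cat !sumn_nseq sumn_map_addn; lia. Qed.

Lemma count_raise2 a b rho : all (fun x => 0 < x) rho ->
  count_mem 1 (raise2 a b rho) = a /\ count_mem 2 (raise2 a b rho) = b.
Proof.
move=> /allP pos; rewrite !count_cat !count_map !count_nseq /= !mul1n !mul0n.
by rewrite !(@eq_in_count _ _ pred0) ?count_pred0 ?addn0 // => x /pos /=; lia.
Qed.

Definition peel (st : seq nat -> nat) (nu : seq nat) : nat :=
  if 1 \in nu then (st (lower2 nu)).+1 else st (map predn nu).

Lemma parts_gt1 la : all (fun x => 0 < x) la -> 1 \notin la -> {in la, forall x, 1 < x}.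
Proof.
move=> /allP pos la1 x xla; rewrite ltn_neqAle pos // andbT.
by apply: contraNneq la1 => eq1; rewrite eq1.
Qed.

Definition gap (k a b : nat) : bool := b + k <= a.

Lemma gap_trans k : transitive (gap k).
Proof. by rewrite /gap => b a c; lia. Qed.

Lemma gap_addn k c a b : gap k (c + a) (c + b) = gap k a b.
Proof. by rewrite /gap -addnA leq_add2l. Qed.

Lemma sorted_gap_addn k c s : sorted (gap k) (map (addn c) s) = sorted (gap k) s.
Proof. by rewrite sorted_map; apply: eq_sorted => a b; apply: gap_addn. Qed.

Lemma k_measure_ub k la S : subseq S la -> sorted (gap k) S -> size S <= k_measure k la.
Proof.
move=> /subseqP[m sz ->] so.
by apply: (@leq_bigmax_seq _ _ _ (fun m => size (mask m la)) m) => //; rewrite mem_bitseqs sz.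
Qed.

Lemma k_measure_attained k la :
  exists2 S, subseq S la & sorted (gap k) S /\ size S = k_measure k la.
Proof.
have m0_in : nseq (size la) false \in bitseqs (size la) by rewrite mem_bitseqs size_nseq.
have m0_gap : sorted (gap k) (mask (nseq (size la) false) la) by rewrite mask_false.
have [m _ [so max_m]] := @bigmax_seq_attained _ _ (fun m => sorted (gap k) (mask m la))
  (fun m => size (mask m la)) _ m0_in m0_gap.
by exists (mask m la); first exact: mask_subseq.
Qed.

Lemma k_measure_addn k c la : k_measure k (map (addn c) la) = k_measure k la.
Proof.
by rewrite /k_measure size_map; apply: eq_big => m; rewrite -map_mask ?size_map //;
  apply: sorted_gap_addn.
Qed.

Lemma sorted_gap2_le2 S : all (fun x => 0 < x <= 2) S -> sorted (gap 2) S -> size S <= 1.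
Proof. by case: S => [|x [|y S]] //= /and3P[x2 y2 _] /andP[]; rewrite /gap; lia. Qed.

(* A 2-separated chain contains at most one of the parts 1 and 2, and appending
   a part 1 to an optimal chain of rho shifted by 2 attains the bound. *)
Lemma k_measure2_raise2 a b rho : 0 < a -> all (fun x => 0 < x) rho ->
  k_measure 2 (raise2 a b rho) = (k_measure 2 rho).+1.
Proof.
move=> a0 /allP pos; apply/eqP; rewrite eqn_leq; apply/andP; split.
- apply/bigmax_leqP_seq => m; rewrite mem_bitseqs size_raise2 => /eqP sz.
  have sz_take : size (take (size rho) m) = size (map (addn 2) rho).
    by rewrite size_take size_map; case: ltnP => //; lia.
  rewrite -(cat_take_drop (size rho) m) mask_cat // -map_mask size_cat size_map.
  move=> /cat_sorted2[so_rho so_12]; rewrite -[(k_measure 2 rho).+1]addn1; apply: leq_add.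
    by rewrite k_measure_ub ?mask_subseq // -(sorted_gap_addn _ 2).
  apply: sorted_gap2_le2 so_12; apply/allP => x /mem_mask.
  by rewrite mem_cat => /orP[] /nseqP[-> _].
- have [S Srho [so <-]] := k_measure_attained 2 rho.
  rewrite -addn1 -(size_map (addn 2)) -[_ + 1](size_cat _ [:: 1]).
  apply: k_measure_ub.
    by rewrite cat_subseq ?map_subseq // sub1seq !mem_cat !mem_nseq a0 eqxx orbT.
  rewrite (sorted_pairwise (@gap_trans 2)) pairwise_cat /= !andbT.
  rewrite -(sorted_pairwise (@gap_trans 2)) sorted_gap_addn so andbT.
  by apply/allrelP => _ y /mapP[x /(mem_subseq Srho)/pos x0 ->]; rewrite inE => /eqP->.
Qed.

Lemma k_measure2_peel la : pairwise geq la -> all (fun x => 0 < x) la ->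
  k_measure 2 la = peel (k_measure 2) la.
Proof.
move=> pla pos; rewrite /peel; case: ifPn => la1.
  have [_ pos2] := lower2_partition pla.
  by rewrite {1}(raise2_lower2 pla pos) k_measure2_raise2 // -has_count has_pred1.
rewrite -(k_measure_addn 2 1 (map predn la)) -map_comp map_id_in //.
by move=> x /(parts_gt1 pos la1); case: x.
Qed.

Lemma durfee_cat top bot : all (fun x => size top <= x) top ->
  all (fun x => x <= size top) bot -> durfee (top ++ bot) = size top.
Proof.
move=> /allP top_ge /allP bot_le; apply/eqP; rewrite eqn_leq; apply/andP; split.
  apply/bigmax_leqP_seq => s _; rewrite count_cat => s_le; rewrite leqNgt.
  apply/negP => lt_s; have := count_size (fun x => s <= x) top.
  suff : count (fun x => s <= x) bot = 0 by lia.
  by apply/eqP; rewrite -leqn0 leqNgt -has_count; apply/hasP => -[x /bot_le]; lia.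
apply: (@leq_bigmax_seq _ _ _ id (size top)); first by rewrite mem_index_iota size_cat; lia.
by rewrite count_cat (@eq_in_count _ _ predT top) ?count_predT ?leq_addr.
Qed.

Lemma durfee_take_drop la : pairwise geq la ->
  [/\ durfee la <= size la, all (fun x => durfee la <= x) (take (durfee la) la)
    & all (fun x => x <= durfee la) (drop (durfee la) la)].
Proof.
move=> pla; have d0 : 0 \in index_iota 0 (size la).+1 by rewrite mem_index_iota.
have [d] := @bigmax_seq_attained _ _ (fun s => s <= count (fun x => s <= x) la) id 0 d0
  (leq0n _).
rewrite mem_index_iota ltnS /= => d_le [d_count def_d].
rewrite /durfee -def_d; split; rewrite ?all_take_geq //.
suff : count (fun x => d.+1 <= x) la <= d by move/(all_drop_lt pla).
have [d_lt|] := ltnP d (size la); last exact: leq_trans (count_size _ _).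
rewrite leqNgt; apply/negP => d1_count; suff : d.+1 <= d by rewrite ltnn.
by rewrite [X in _ <= X]def_d; apply: (@leq_bigmax_seq _ _ _ id d.+1); rewrite ?mem_index_iota.
Qed.

Lemma durfee_gt0 la : all (fun x => 0 < x) la -> la != [::] -> 0 < durfee la.
Proof.
case: la => // x s /andP[x0 _] _.
by apply: (@leq_bigmax_seq _ _ _ id 1); rewrite ?mem_index_iota //= x0.
Qed.

Lemma durfee_decomposition la : pairwise geq la -> all (fun x => 0 < x) la -> la != [::] ->
  exists m t c top bot, [/\ durfee la = m.+1,
    la = top ++ (m.+1 + t) :: bot ++ nseq c 1, size top = m,
    all (fun x => m.+1 + t <= x) top && pairwise geq top &
    all (fun x => 2 <= x <= m.+1) bot && pairwise geq bot].
Proof.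
move=> pla /allP pos la_nil; have := durfee_gt0 (introT allP pos) la_nil.
have [] := durfee_take_drop pla; case: (durfee la) => // m d_size top_ge bot_le _.
set x := nth 0 la m; set bot := drop m.+1 la.
have def_la : la = take m la ++ x :: bot by rewrite -drop_nth ?cat_take_drop.
have x_ge : m.+1 <= x.
  by move: top_ge; rewrite (take_nth 0) // all_rcons => /andP[].
move: pla; rewrite {1}def_la pairwise_cat /= => /and3P[/allrelP top_x ptop /andP[_ pbot]].
have def_bot : bot = filter (fun y => 2 <= y) bot ++ nseq (count_mem 1 bot) 1.
  rewrite {1}(pairwise_geq_split 2 pbot) (@filter_in_pred1 _ (fun y => y < 2) 1) //.
  move=> y y_bot /=.
  by have := pos y (mem_drop y_bot); lia.
exists m, (x - m.+1), (count_mem 1 bot), (take m la), (filter (fun y => 2 <= y) bot).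
split; rewrite ?subnKC ?size_take ?ptop ?pairwise_filter ?andbT //.
- by rewrite -def_bot.
- by rewrite d_size.
- by apply/allP => y y_top; apply: top_x y_top (mem_head _ _).
- by apply/allP => y; rewrite mem_filter => /andP[-> /(allP bot_le)].
Qed.

(* Write a partition with Durfee side d = m + 1 as top ++ (d + t) :: bot ++ nseq c 1,
   where top has m parts >= d + t and the parts of bot lie in [2, d]. If c < t,
   the c ones are removed, the first d parts lowered by c and c parts d + 1
   inserted; otherwise each part x of top becomes x + 1 - t, the part d + t
   becomes t parts d + 1 and the c ones become c - t + 1 ones. *)
Definition twist (la : seq nat) : seq nat :=
  if durfee la is m.+1 then
    let t := nth 0 la m - m.+1 in
    let bot := drop m.+1 la in
    let c := count_mem 1 bot in
    let bot2 := filter (fun x => 2 <= x) bot in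
    if c < t then map (subn^~ c) (take m.+1 la) ++ nseq c m.+2 ++ bot2
    else map (fun x => x + 1 - t) (take m la) ++ nseq t m.+2 ++ bot2 ++ nseq (c - t).+1 1
  else la.

Definition untwist (nu : seq nat) : seq nat :=
  if 1 \in nu then
    let m := durfee (lower2 nu) in
    let bot := drop m nu in
    let t := count_mem m.+2 bot in
    map (fun x => x + t - 1) (take m nu) ++ (m.+1 + t) ::
      filter (fun x => 2 <= x <= m.+1) bot ++ nseq ((count_mem 1 nu).-1 + t) 1
  else
    let d := durfee (map predn nu) in
    let bot := drop d nu in
    let c := count_mem d.+1 bot in
    map (addn c) (take d nu) ++ filter (fun x => x <= d) bot ++ nseq c 1.

Section TwistForm.
Variables (m t c : nat) (top bot : seq nat).
Hypotheses (size_top : size top = m) (top_ge : all (fun x => m.+1 + t <= x) top).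
Hypotheses (ptop : pairwise geq top) (bot_range : all (fun x => 2 <= x <= m.+1) bot).
Hypothesis pbot : pairwise geq bot.

Let la := top ++ (m.+1 + t) :: bot ++ nseq c 1.
Let top' := rcons top (m.+1 + t).

Lemma form_top'_ge : all (fun x => m.+1 + t <= x) top'.
Proof. by rewrite all_rcons leqnn top_ge. Qed.

Lemma form_top'_sorted : pairwise geq top'.
Proof. by rewrite /top' -cats1 (pairwise_geq_cat (lo := m.+1 + t)) //= leqnn. Qed.

Lemma form_bot_le : all (fun x => x <= m.+1) bot.
Proof. by apply: sub_all bot_range => x /andP[]. Qed.

Lemma durfee_form : durfee la = m.+1.
Proof.
rewrite /la -cat_rcons -/top' durfee_cat size_rcons size_top //.
  by apply: sub_all form_top'_ge => x; apply: leq_trans; rewrite leq_addr.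
by rewrite all_cat form_bot_le all_nseq orbT.
Qed.

Lemma twist_form : twist la = if c < t
    then map (subn^~ c) top' ++ nseq c m.+2 ++ bot
    else map (fun x => x + 1 - t) top ++ nseq t m.+2 ++ bot ++ nseq (c - t).+1 1.
Proof.
have /allP bot_ge2 : all (fun x => 1 < x) bot by apply: sub_all bot_range => x /andP[].
rewrite /twist durfee_form.
have -> : drop m.+1 la = bot ++ nseq c 1.
  by rewrite /la -cat_rcons drop_size_cat // size_rcons size_top.
have -> : nth 0 la m - m.+1 = t by rewrite /la nth_cat size_top ltnn subnn addKn.
have -> : count_mem 1 (bot ++ nseq c 1) = c.
  rewrite count_cat count_nseq /= mul1n (@eq_in_count _ _ pred0) ?count_pred0 //.
  by move=> x /bot_ge2 /=; lia.
have -> : filter (fun x => 2 <= x) (bot ++ nseq c 1) = bot.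
  by rewrite filter_cat filter_nseq /= cats0; apply/all_filterP/allP.
by rewrite /la -cat_rcons take_size_cat ?size_rcons ?size_top // cat_rcons take_size_cat.
Qed.

Lemma sumn_form : sumn la = sumn top + (m.+1 + t) + sumn bot + c.
Proof. by rewrite /la sumn_cat /= sumn_cat sumn_nseq mul1n !addnA. Qed.

Lemma size_form : size la = m.+1 + size bot + c.
Proof. by rewrite /la size_cat /= size_cat size_nseq size_top; lia. Qed.

Section FewOnes.
Hypothesis c_lt_t : c < t.
Let nu := map (subn^~ c) top' ++ nseq c m.+2 ++ bot.

Lemma twist_few_head_ge : all (fun x => m.+2 <= x) (map (subn^~ c) top').
Proof. by rewrite all_map; apply: sub_all form_top'_ge => x /=; lia. Qed.

Lemma twist_few_ge2 : all (fun x => 2 <= x) nu.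
Proof.
rewrite !all_cat all_nseq orbT /=; apply/andP; split.
  by apply: sub_all twist_few_head_ge => x; lia.
by apply: sub_all bot_range => x /andP[].
Qed.

Lemma partition_twist_few : nu \in partitions (sumn la).
Proof.
apply/partitionsP; split.
- apply: (pairwise_geq_cat (lo := m.+2)).
  + by apply: pairwise_geq_map form_top'_sorted => x y; lia.
  + apply: (pairwise_geq_cat (lo := m.+2)); rewrite ?pairwise_geq_nseq ?all_nseq ?leqnn ?orbT //.
    by apply: sub_all form_bot_le => x; lia.
  + exact: twist_few_head_ge.
  + by rewrite all_cat all_nseq leqnn orbT; apply: sub_all form_bot_le => x; lia.
- by apply: sub_all twist_few_ge2 => x; lia.
- rewrite sumn_form !sumn_cat sumn_nseq.
  have /sumn_map_shift : {in top', forall x, x - c + c = x + 0}.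
    by move=> x /(allP form_top'_ge) x_ge; rewrite addn0 subnK //; lia.
  rewrite size_rcons size_top sumn_rcons; set s := sumn (map _ _); nia.
Qed.

Lemma size_twist_few : size nu = size la.
Proof. by rewrite size_form !size_cat size_map size_rcons size_nseq size_top; lia. Qed.

Lemma peel_durfee_twist_few : peel durfee nu = m.+1.
Proof.
rewrite /peel ifF; last by apply/negbTE/negP => /(allP twist_few_ge2).
rewrite map_cat durfee_cat !size_map size_rcons size_top //.
  by rewrite all_map; apply: sub_all twist_few_head_ge => x /=; lia.
rewrite map_cat all_cat map_nseq all_nseq leqnn orbT all_map.
by apply: sub_all form_bot_le => x /=; lia.
Qed.

Lemma untwist_twist_few : untwist nu = la.
Proof.
have nu1 : (1 \in nu) = false by apply/negbTE/negP => /(allP twist_few_ge2).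
have := peel_durfee_twist_few; rewrite /peel /untwist nu1 => ->.
have size_head : size (map (subn^~ c) top') = m.+1 by rewrite size_map size_rcons size_top.
rewrite /nu drop_size_cat // take_size_cat // count_cat count_nseq /= eqxx mul1n.
rewrite (@eq_in_count _ _ pred0) ?count_pred0 ?addn0; last first.
  by move=> x /(allP form_bot_le) /=; lia.
rewrite filter_cat filter_nseq /= ltnn mul0n /= (all_filterP form_bot_le).
rewrite -map_comp map_id_in ?cat_rcons // => x /(allP form_top'_ge) /=; lia.
Qed.

End FewOnes.

Section ManyOnes.
Hypothesis t_le_c : t <= c.
Let f x := x + 1 - t.
Let nu := map f top ++ nseq t m.+2 ++ bot ++ nseq (c - t).+1 1.

Lemma twist_many_head_ge : all (fun x => m.+2 <= x) (map f top).
Proof. by rewrite all_map; apply: sub_all top_ge => x /=; rewrite /f; lia. Qed.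

Lemma partition_twist_many : nu \in partitions (sumn la).
Proof.
apply/partitionsP; split.
- apply: (pairwise_geq_cat (lo := m.+2)).
  + by apply: pairwise_geq_map ptop => x y; rewrite /f; lia.
  + apply: (pairwise_geq_cat (lo := m.+2)); rewrite ?pairwise_geq_nseq ?all_nseq ?leqnn ?orbT //.
      apply: (pairwise_geq_cat (lo := 1)); rewrite ?pairwise_geq_nseq ?all_nseq ?orbT //.
      by apply: sub_all bot_range => x /andP[]; lia.
    by rewrite all_cat all_nseq orbT andbT; apply: sub_all form_bot_le => x; lia.
  + exact: twist_many_head_ge.
  + by rewrite !all_cat !all_nseq leqnn !orbT andbT; apply: sub_all form_bot_le => x; lia.
- rewrite !all_cat !all_nseq !orbT andbT; apply/andP; split.
    by apply: sub_all twist_many_head_ge => x; lia.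
  by apply: sub_all bot_range => x /andP[]; lia.
- rewrite sumn_form !sumn_cat !sumn_nseq.
  have /sumn_map_shift : {in top, forall x, f x + t = x + 1}.
    by move=> x /(allP top_ge) x_ge; rewrite /f; lia.
  rewrite size_top; set s := sumn (map _ _); nia.
Qed.

Lemma size_twist_many : size nu = size la.
Proof. by rewrite size_form !size_cat size_map !size_nseq size_top; lia. Qed.

Lemma peel_durfee_twist_many : peel durfee nu = m.+1.
Proof.
rewrite /peel ifT ?mem_cat ?mem_nseq ?eqxx ?orbT //; congr S.
have /all_filterP head_ge3 : all (fun x => 3 <= x) (map f top).
  by case: m size_top twist_many_head_ge => [/size0nil-> //|m' _]; apply: sub_all => x; lia.
rewrite /lower2 filter_cat map_cat head_ge3 durfee_cat ?size_map ?size_top //.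
  by rewrite all_map; apply: sub_all twist_many_head_ge => x /=; lia.
rewrite all_map; apply/allP => x; rewrite mem_filter !mem_cat => /andP[_ /or3P[]].
- by move/nseqP => [-> _] /=; lia.
- by move/(allP form_bot_le) => /=; lia.
- by move/nseqP => [-> _] /=; lia.
Qed.

Lemma untwist_twist_many : untwist nu = la.
Proof.
have nu1 : 1 \in nu by rewrite !mem_cat !mem_nseq eqxx !orbT.
have := peel_durfee_twist_many; rewrite /peel /untwist nu1 => -[->].
have size_head : size (map f top) = m by rewrite size_map size_top.
have /allP bot_ge2 : all (fun x => 1 < x) bot by apply: sub_all bot_range => x /andP[].
rewrite /nu drop_size_cat // take_size_cat //.
have -> : count_mem m.+2 (nseq t m.+2 ++ bot ++ nseq (c - t).+1 1) = t.
  rewrite !count_cat !count_nseq /= eqxx (@eq_in_count _ _ pred0) ?count_pred0.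
    by rewrite mul0n !addn0 mul1n.
  by move=> x /(allP form_bot_le) /=; lia.
have -> : count_mem 1 (map f top ++ nseq t m.+2 ++ bot ++ nseq (c - t).+1 1) = (c - t).+1.
  rewrite !count_cat !count_nseq /= mul0n mul1n !(@eq_in_count _ _ pred0) ?count_pred0 //.
    by move=> x /bot_ge2 /=; lia.
  by move=> x /(allP twist_many_head_ge) /=; lia.
rewrite !filter_cat !filter_nseq /= ltnn mul0n /= cats0 (all_filterP bot_range) subnK //.
by rewrite -map_comp map_id_in // => x /(allP top_ge) /=; rewrite /f; lia.
Qed.

End ManyOnes.

Lemma twist_form_spec :
  [/\ twist la \in partitions (sumn la), size (twist la) = size la,
      peel durfee (twist la) = durfee la & untwist (twist la) = la].
Proof.
rewrite twist_form durfee_form; case: ltnP => [c_lt_t|t_le_c]; split.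
- exact: partition_twist_few.
- exact: size_twist_few.
- exact: peel_durfee_twist_few.
- exact: untwist_twist_few.
- exact: partition_twist_many.
- exact: size_twist_many.
- exact: peel_durfee_twist_many.
- exact: untwist_twist_many.
Qed.

End TwistForm.

Lemma twist_spec la : pairwise geq la -> all (fun x => 0 < x) la ->
  [/\ twist la \in partitions (sumn la), size (twist la) = size la,
      peel durfee (twist la) = durfee la & untwist (twist la) = la].
Proof.
move=> pla pos; have [->|la_nil] := eqVneq la [::].
  by rewrite /twist /peel /untwist /durfee /= !big_cons !big_nil.
have [m [t [c [top [bot [d_la def_la size_top /andP[top_ge ptop] /andP[bot_range pbot]]]]]]] :=
  durfee_decomposition pla pos la_nil.
by rewrite def_la; apply: twist_form_spec.
Qed.

Definition count_stat (st : seq nat -> nat) n l k :=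
  count (fun la => (size la == l) && (st la == k)) (partitions n).

Definition ones_twos (la : seq nat) : option (nat * nat) :=
  if 1 \in la then Some (count_mem 1 la, count_mem 2 la) else None.

Lemma count_peel_fiber_some st n l k a b (w := 2 * (l - a - b) + 2 * b + a) :
  count (fun la => ((size la == l) && (peel st la == k)) && (ones_twos la == Some (a, b)))
    (partitions n) =
  count (fun rho => [&& (0 < a) && (a + b <= l) && (w <= n),
                        size rho == l - a - b & (st rho).+1 == k])
    (partitions (n - w)).
Proof.
apply: (count_bij_in (f := lower2) (g := raise2 a b)); rewrite ?undup_uniq //.
- move=> la; rewrite !mem_filter /ones_twos /peel => /andP[+ /partitionsP[pla pos sum_la]].
  case la1: (1 \in la) => /andP[/andP[/eqP size_la /eqP <-] /eqP key_la] //.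
  case: key_la => a_la b_la.
  have [prho posrho] := lower2_partition pla.
  have a0 : 0 < a by rewrite -a_la -has_count has_pred1.
  move: size_la sum_la; rewrite (raise2_lower2 pla pos) a_la b_la size_raise2 sumn_raise2.
  rewrite lower2_raise2 // => size_la sum_la; rewrite eqxx a0 andbT /= -!andbA /w.
  by apply/and4P; split; [lia | lia | apply/eqP; lia | apply/partitionsP; split => //; lia].
- move=> rho; rewrite !mem_filter.
  move=> /andP[/andP[/andP[/andP[a0 abl] wn] /andP[/eqP size_rho st_rho]]].
  move=> /partitionsP[prho pos sum_rho]; have [praise posraise] := raise2_partition a b prho.
  have [a_raise b_raise] := count_raise2 a b pos.
  have raise1 : 1 \in raise2 a b rho by rewrite -has_pred1 has_count a_raise.
  rewrite /ones_twos /peel raise1 lower2_raise2 // a_raise b_raise st_rho size_raise2 !eqxx.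
  rewrite andbT /=; apply/andP; split; first by apply/eqP; lia.
  by apply/partitionsP; split => //; rewrite sumn_raise2; lia.
- move=> la; rewrite !mem_filter /ones_twos => /andP[+ /partitionsP[pla pos _]].
  case: (1 \in la) => /andP[_ /eqP key_la] //.
  by case: key_la => <- <-; rewrite -raise2_lower2.
- by move=> rho; rewrite mem_filter => /andP[_ /partitionsP[_ pos _]]; apply: lower2_raise2.
Qed.

Lemma count_peel_fiber_none st n l k :
  count (fun la => ((size la == l) && (peel st la == k)) && (ones_twos la == None))
    (partitions n) =
  count_stat st (n - l) l k.
Proof.
apply: (count_bij_in (f := map predn) (g := map (addn 1))); rewrite ?undup_uniq //.
- move=> la; rewrite !mem_filter /ones_twos /peel => /andP[+ /partitionsP[pla pos sum_la]].
  case la1: (1 \in la) => /andP[/andP[/eqP size_la /eqP <-] _] //.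
  have la_gt1 := parts_gt1 pos (negbT la1).
  rewrite size_map size_la !eqxx /=; apply/partitionsP; split.
  - by apply: pairwise_geq_map pla => x y; lia.
  - by rewrite all_map; apply/allP => x /la_gt1 /=; lia.
  - have := sumn_map_addn 1 (map predn la); rewrite -map_comp map_id_in ?size_map.
      by lia.
    by move=> x /la_gt1 /=; lia.
- move=> rho; rewrite !mem_filter => /andP[/andP[/eqP size_rho /eqP st_rho]].
  move=> /partitionsP[prho pos sum_rho]; have := sumn_ge_size pos.
  rewrite /ones_twos /peel size_map size_rho -map_comp map_id st_rho.
  have -> : (1 \in map (addn 1) rho) = false.
    by apply/negbTE/mapP => -[x /(allP pos) /=]; lia.
  rewrite !eqxx /= => l_le; apply/partitionsP; split.
  - by apply: pairwise_geq_map prho => x y; lia.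
  - by rewrite all_map; apply/allP.
  - by rewrite sumn_map_addn sum_rho size_rho; lia.
- move=> la; rewrite mem_filter /ones_twos => /andP[+ /partitionsP[pla pos _]].
  case la1: (1 \in la) => /andP[_ _] //; rewrite -map_comp map_id_in // => x.
  by move=> /(parts_gt1 pos (negbT la1)) /=; lia.
- by move=> rho _; rewrite -map_comp map_id.
Qed.

Lemma count_stat_eq0 st n l k : n < l -> count_stat st n l k = 0.
Proof.
move=> n_lt_l; apply/eqP; rewrite -leqn0 leqNgt -has_count.
apply/hasP => -[la /partitionsP[_ pos sum_la] /andP[/eqP size_la _]].
by have := sumn_ge_size pos; lia.
Qed.

Lemma count_stat_peel_eq s1 s2 n l k : 0 < l ->
  (forall n' l' k', n' < n -> count_stat s1 n' l' k' = count_stat s2 n' l' k') ->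
  count_stat (peel s1) n l k = count_stat (peel s2) n l k.
Proof.
move=> l0 IH; rewrite /count_stat.
apply: (count_fibers_eq (key := ones_twos)) => -[[a b]|]; last first.
  rewrite !count_peel_fiber_none; have [->|n0] := posnP n.
    by rewrite sub0n !count_stat_eq0.
  by apply: IH; lia.
rewrite !count_peel_fiber_some; set w := _ + a.
have [cond|/negbTE ncond] := boolP ((0 < a) && (a + b <= l) && (w <= n)); last first.
  by rewrite !(@eq_count _ _ pred0) // => rho; rewrite ncond.
case: k => [|k]; first by rewrite !(@eq_count _ _ pred0) // => rho; rewrite andbF.
have /IH : n - w < n by move: cond; rewrite /w; lia.
move=> /(_ (l - a - b) k); rewrite /count_stat => eq_counts.
by under eq_count do rewrite eqSS; under [RHS]eq_count do rewrite eqSS.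
Qed.

Lemma count_stat_k_measure2 n l k :
  count_stat (k_measure 2) n l k = count_stat (peel (k_measure 2)) n l k.
Proof. by apply: eq_in_count => la /partitionsP[pla pos _]; rewrite -k_measure2_peel. Qed.

Lemma count_stat_durfee n l k : count_stat durfee n l k = count_stat (peel durfee) n l k.
Proof.
rewrite /count_stat [RHS](count_preim_inj (f := twist)) ?undup_uniq //.
- apply: eq_in_count => la /partitionsP[pla pos _].
  by have [_ /= -> -> _] := twist_spec pla pos.
- by move=> la /partitionsP[pla pos <-]; have [] := twist_spec pla pos.
move=> la1 la2 /partitionsP[pla1 pos1 _] /partitionsP[pla2 pos2 _] eq12.
have [_ _ _ <-] := twist_spec pla1 pos1; have [_ _ _ <-] := twist_spec pla2 pos2.
by rewrite eq12.
Qed.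

Theorem corollary1p5 (n l m : nat) :
  count (fun la => (size la == l) && (k_measure 2 la == m)) (partitions n) =
  count (fun la => (size la == l) && (durfee la == m)) (partitions n).
Proof.
elim/ltn_ind: n l m => n IH l m.
have [->|l0] := posnP l.
  by apply: eq_in_count => -[|x la] _ //; rewrite /k_measure /durfee /= !big_cons !big_nil.
rewrite -[LHS]/(count_stat _ n l m) -[RHS]/(count_stat _ n l m).
rewrite count_stat_k_measure2 count_stat_durfee; apply: count_stat_peel_eq l0 _.
by move=> n' l' k' /IH; apply.
Qed.
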